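(* Let $d\geq 3$. Let $G$ be a finite $C_4$-free bipartite graph with vertex classes $A$ and $B$. Suppose $A$ has a partition $A=A_1\cup\dots\cup A_m$ with $|A_i|\leq d^2$ for each $i\in[m]$, and suppose that for all $b\in B$ and $i\in[m]$ we have either $|N(b)\cap A_i|=0$ or $|N(b)\cap A_i|\geq d$. Then $d(G)\leq 18d$.
   Context: $d(G)=2e(G)/|V(G)|$ is the average degree and $N(b)$ the neighbourhood of $b$ in $G$. A graph is $C_4$-free if it contains no $4$-cycle as a subgraph. *)

From HB Require Import structures.
From mathcomp Require Import all_boot all_order all_algebra.
Set Implicit Arguments. Unset Strict Implicit. Unset Printing Implicit Defensive.
Import Order.TTheory GRing.Theory Num.Theory.

Definition simple_graph (T : finType) (e : rel T) : Prop :=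
  symmetric e /\ irreflexive e.

Definition nbhd (T : finType) (e : rel T) (v : T) : {set T} := [set x | e v x].

Definition edges (T : finType) (e : rel T) : {set {set T}} :=
  [set [set x; y] | x in T, y in T & e x y].

Definition avg_deg (R : numFieldType) (T : finType) (e : rel T) : R :=
  (2 * #|edges e|)%:R / #|T|%:R.

Definition C4_free (T : finType) (e : rel T) : Prop :=
  forall a b c d : T, uniq [:: a; b; c; d] ->
    ~ [&& e a b, e b c, e c d & e d a].

Definition bipartite_with (T : finType) (e : rel T) (A B : {set T}) : Prop :=
  [/\ A :|: B = [set: T], [disjoint A & B] &
      forall x y, e x y -> (x \in A) = (y \in B)].

(* Two distinct vertices have at most one common neighbour in a C4-free graph, so each
   2-subset of a part S = A_i lies in N(b) for at most one b in B.  Counting ordered pairs,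
   sum_b k_b (k_b - 1) <= |S| (|S| - 1) <= |S| d^2 with k_b = |N(b) :&: S|.  Since each k_b
   is 0 or at least d, (d - 1) k_b <= k_b (k_b - 1).  Every edge has an end in B, so summing
   over the parts gives (d - 1) e(G) <= d^2 |A|, whence d(G) <= 2 d^2 / (d - 1) <= 3 d
   for d >= 3. *)

From HB Require Import structures.
From mathcomp Require Import all_boot all_order all_algebra.
From mathcomp Require Import lra.

Set Implicit Arguments.
Unset Strict Implicit.
Unset Printing Implicit Defensive.

Import Order.TTheory GRing.Theory Num.Theory.

Local Open Scope ring_scope.

Lemma leq_sum_card_disjoint (I T : finType) (r : {pred I}) (F : I -> {set T})
    (S : {set T}) :
  (forall i, i \in r -> F i \subset S) ->
  (forall x i j, i \in r -> j \in r -> x \in F i -> x \in F j -> i = j) ->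
  (\sum_(i in r) #|F i| <= #|S|)%N.
Proof.
move=> sub_FS F_inj.
under eq_bigr => i _ do rewrite -sum1_card.
rewrite (exchange_big_dep (mem S)) => [|i x ri]; last exact: subsetP (sub_FS i ri) x.
rewrite -[leqRHS]sum1_card; apply: leq_sum => x _.
rewrite sum1_card; apply/card_le1_eqP => i j /andP[ri xFi] /andP[rj xFj].
exact: F_inj xFj xFi.
Qed.

Lemma leq_card_bigcup (I T : finType) (P : {pred I}) (F : I -> {set T}) :
  (#|\bigcup_(i in P) F i| <= \sum_(i in P) #|F i|)%N.
Proof.
elim/big_ind2: _ => [|m U n V leUm leVn|i _]; rewrite ?cards0 //.
by rewrite (leq_trans (leq_card_setU U V)) ?leq_add.
Qed.

Lemma card_partition_setI (T : finType) (P : {set {set T}}) (D S : {set T}) :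
  partition P D -> S \subset D -> #|S| = (\sum_(A in P) #|S :&: A|)%N.
Proof.
move=> partP sSD.
have -> : #|S| = (\sum_(x in D | x \in S) 1)%N.
  by rewrite sum1dep_card -{1}(setIidPl sSD); apply: eq_card => x; rewrite !inE andbC.
rewrite (set_partition_big_cond _ partP).
by apply: eq_bigr => A _; rewrite -sum1_card; apply: eq_bigl => x; rewrite !inE andbC.
Qed.

Lemma mul_pred_eq_bin2 n : (n * n.-1 = 2 * 'C(n, 2))%N.
Proof. by rewrite -mul_bin_diag bin1. Qed.

Lemma ler_subr1M_mul_pred (R : numDomainType) (d : R) k :
  k = 0%N \/ d <= k%:R -> (d - 1) * k%:R <= (k * k.-1)%:R.
Proof.
case: k => [_ | k [//| le_dk]]; first by rewrite mulr0.
by rewrite natrM mulrC ler_wpM2l // lerBlDr natr1.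
Qed.

Section BipartiteC4Free.

Variables (T : finType) (e : rel T).

Lemma nbhd_sub_bipartite (A B : {set T}) b :
  bipartite_with e A B -> b \in B -> nbhd e b \subset A.
Proof.
move=> [AB_T disAB e_AB] bB; apply/subsetP => x; rewrite inE => ebx.
have xAB : x \in A :|: B by rewrite AB_T inE.
have xNB : x \notin B by rewrite -(e_AB b x ebx) (disjointFl disAB bB).
by move: xAB; rewrite inE (negbTE xNB) orbF.
Qed.

Lemma card_edges_le_sum_nbhd (A B : {set T}) :
  symmetric e -> bipartite_with e A B ->
  (#|edges e| <= \sum_(b in B) #|nbhd e b|)%N.
Proof.
move=> esym bip; have [AB_T _ e_AB] := bip.
have edges_sub : edges e \subset \bigcup_(b in B) [set [set b; x] | x in nbhd e b].
  apply/subsetP => _ /imset2P[x y _ /[!inE] exy ->].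
  have [xB | xNB] := boolP (x \in B).
    by apply/bigcupP; exists x => //; apply/imsetP; exists y; rewrite ?inE.
  have : x \in A :|: B by rewrite AB_T inE.
  rewrite inE (negbTE xNB) orbF => xA.
  have yB : y \in B by rewrite -(e_AB x y exy).
  by apply/bigcupP; exists y => //; apply/imsetP; exists x; rewrite ?inE 1?esym // setUC.
apply: leq_trans (subset_leq_card edges_sub) (leq_trans (leq_card_bigcup _ _) _).
by apply: leq_sum => b _; apply: leq_imset_card.
Qed.

Hypotheses (simple_e : simple_graph e) (C4_free_e : C4_free e).

Lemma C4_free_common_nbr x y b b' :
  x != y -> e b x -> e b y -> e b' x -> e b' y -> b = b'.
Proof.
have [esym eirr] := simple_e.
have adj_neq z w : e z w -> w != z by move=> ezw; apply: contraTneq ezw => ->; rewrite eirr.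
move=> xy ebx eby eb'x eb'y; apply/eqP; apply: contraT => bb'; exfalso.
apply: (@C4_free_e x b y b'); last by rewrite (esym x b) ebx eby (esym y b') eb'y eb'x.
rewrite /= !inE !negb_or xy bb' (eq_sym b y).
by rewrite (adj_neq _ _ ebx) (adj_neq _ _ eb'x) (adj_neq _ _ eby) (adj_neq _ _ eb'y).
Qed.

Lemma sum_bin2_nbhd_le (B S : {set T}) :
  (\sum_(b in B) 'C(#|nbhd e b :&: S|, 2) <= 'C(#|S|, 2))%N.
Proof.
rewrite -cards_draws; under eq_bigr => b _ do rewrite -cards_draws.
apply: leq_sum_card_disjoint => [b _ | X b b' _ _].
  by apply/subsetP => X; rewrite !inE => /andP[/subset_trans-> //]; apply: subsetIr.
rewrite !inE => /andP[sXb /cards2P[x [y [xy defX]]]] /andP[sXb' _].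
move: sXb sXb'; rewrite defX !subUset !sub1set !inE.
move=> /andP[/andP[ebx _] /andP[eby _]] /andP[/andP[eb'x _] /andP[eb'y _]].
exact: C4_free_common_nbr xy ebx eby eb'x eb'y.
Qed.

Lemma ler_subr1M_sum_nbhd (R : numDomainType) (d : R) (B S : {set T}) :
  (forall b, b \in B -> #|nbhd e b :&: S| = 0%N \/ d <= #|nbhd e b :&: S|%:R) ->
  (d - 1) * \sum_(b in B) #|nbhd e b :&: S|%:R <= (#|S| * #|S|.-1)%:R.
Proof.
move=> gap; rewrite mulr_sumr.
apply: le_trans (_ : \sum_(b in B) (#|nbhd e b :&: S| * #|nbhd e b :&: S|.-1)%:R <= _).
  by apply: ler_sum => b bB; apply: ler_subr1M_mul_pred; apply: gap.
rewrite -natr_sum ler_nat mul_pred_eq_bin2.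
under eq_bigr do rewrite mul_pred_eq_bin2.
by rewrite -big_distrr leq_mul2l sum_bin2_nbhd_le orbT.
Qed.

Lemma ler_subr1M_card_edges (R : numDomainType) (d : R) (A B : {set T})
    (P : {set {set T}}) :
  1 <= d -> bipartite_with e A B -> partition P A ->
  (forall Ai, Ai \in P -> #|Ai|%:R <= d ^+ 2) ->
  (forall b Ai, b \in B -> Ai \in P ->
     #|nbhd e b :&: Ai| = 0%N \/ d <= #|nbhd e b :&: Ai|%:R) ->
  (d - 1) * #|edges e|%:R <= #|A|%:R * d ^+ 2.
Proof.
move=> d_ge1 bip partP card_part gap.
have d1_ge0 : 0 <= d - 1 by rewrite subr_ge0.
have edges_le : (#|edges e| <= \sum_(Ai in P) \sum_(b in B) #|nbhd e b :&: Ai|)%N.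
  rewrite exchange_big /=; apply: leq_trans (card_edges_le_sum_nbhd simple_e.1 bip) (eq_leq _).
  by apply: eq_bigr => b bB; apply: card_partition_setI partP (nbhd_sub_bipartite bip bB).
have part_le Ai : Ai \in P ->
    (d - 1) * (\sum_(b in B) #|nbhd e b :&: Ai|)%:R <= #|Ai|%:R * d ^+ 2.
  move=> PAi; rewrite natr_sum.
  apply: le_trans (ler_subr1M_sum_nbhd (fun b bB => gap b Ai bB PAi)) _.
  by rewrite natrM ler_wpM2l // (le_trans _ (card_part _ PAi)) // ler_nat leq_pred.
apply: le_trans (_ : (d - 1) * (\sum_(Ai in P) \sum_(b in B) #|nbhd e b :&: Ai|)%N%:R <= _).
  by rewrite ler_wpM2l ?ler_nat.
rewrite natr_sum mulr_sumr (le_trans (ler_sum _ part_le)) //.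
by rewrite -mulr_suml -natr_sum -(card_partition partP).
Qed.

End BipartiteC4Free.

Theorem lemma18 (R : realFieldType) (d : R) (T : finType) (e : rel T)
    (A B : {set T}) (P : {set {set T}}) :
  3 <= d ->
  simple_graph e ->
  C4_free e ->
  bipartite_with e A B ->
  partition P A ->
  (forall Ai, Ai \in P -> #|Ai|%:R <= d ^+ 2) ->
  (forall b Ai, b \in B -> Ai \in P ->
     #|nbhd e b :&: Ai| = 0%N \/ d <= #|nbhd e b :&: Ai|%:R) ->
  avg_deg R e <= 18 * d.
Proof.
move=> d_ge3 simple_e C4_free_e bip partP card_part gap.
have d1_gt0 : 0 < d - 1 by lra.
have d_ge1 : 1 <= d by lra.
have edges_le : (d - 1) * #|edges e|%:R <= #|T|%:R * d ^+ 2.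
  apply: le_trans (ler_subr1M_card_edges simple_e C4_free_e d_ge1 bip partP card_part gap) _.
  by rewrite ler_wpM2r ?exprn_ge0 ?ler_nat ?max_card //; lra.
rewrite /avg_deg; have [-> | T_gt0] := posnP #|T|; first by rewrite invr0 mulr0; lra.
rewrite ler_pdivrMr ?ltr0n // natrM -(ler_pM2l d1_gt0).
have : 0 <= #|T|%:R * (d * (8 * d - 9)) :> R by rewrite mulr_ge0 ?mulr_ge0 //; lra.
nra.
Qed.
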